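(* Let $\psi:[0,\infty)\to[0,\infty)$ be convex, nondecreasing, not identically zero, with $\psi(0)=0$, and for $L>0$ let $\Psi(z;L)=\exp\big(\frac{2}{L^2}\psi(Lz)\big)-1$. Suppose that for some $\tau>0$ and $L>0$ a random variable $Z$ satisfies $$P\Big(|Z|\ge \frac{\tau}{L}\,\psi^{-1}(L^2t/2)\Big)\le 2e^{-t}\quad\text{for all } t>0.$$ Then $\|Z\|_{\Psi(\cdot;\sqrt3L)}\le\sqrt3\,\tau$.
   Context: For $t>0$, $\psi^{-1}(t)$ is the unique $x\ge0$ with $\psi(x)=t$ (well defined since $\psi$ is continuous, unbounded and strictly increasing where positive). The Orlicz norm is $\|X\|_{\Psi}=\inf\{c>0:E\Psi(|X|/c)\le1\}$. *)

From HB Require Import structures.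
From mathcomp Require Import all_boot all_order all_algebra.
From mathcomp Require Import all_classical all_reals all_analysis.
Set Implicit Arguments. Unset Strict Implicit. Unset Printing Implicit Defensive.
Import Order.TTheory GRing.Theory Num.Theory.
Local Open Scope classical_set_scope.
Local Open Scope ring_scope.

Definition admissible_psi (R : realType) (psi : R -> R) : Prop :=
  [/\ (forall x, 0 <= x -> 0 <= psi x),
      (forall x y l, 0 <= x -> 0 <= y -> 0 <= l <= 1 ->
          psi (l * x + (1 - l) * y) <= l * psi x + (1 - l) * psi y),
      (forall x y, 0 <= x -> x <= y -> psi x <= psi y),
      (exists x, 0 <= x /\ psi x != 0) &
      psi 0 = 0].

Definition psi_inv (R : realType) (psi : R -> R) (t : R) : R :=
  xget 0 [set x | 0 <= x /\ psi x = t].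

Definition PsiL (R : realType) (psi : R -> R) (L z : R) : R :=
  expR (2 / L ^+ 2 * psi (L * z)) - 1.

Definition orlicz_norm (d : measure_display) (T : measurableType d) (R : realType)
  (P : probability T R) (Phi : R -> R) (X : T -> R) : \bar R :=
  ereal_inf [set c%:E | c in [set c : R | 0 < c /\
     (\int[P]_x (Phi (`|X x| / c))%:E <= 1)%E]].

From HB Require Import structures.
From mathcomp Require Import all_boot all_order all_algebra.
From mathcomp Require Import all_classical all_reals all_analysis.
From mathcomp Require Import ring lra measurable_realfun.
Import Order.TTheory GRing.Theory Num.Theory.
Import numFieldNormedType.Exports.
Local Open Scope classical_set_scope.
Local Open Scope ring_scope.

(* Put [Y := Psi(|Z| / (sqrt 3 tau); sqrt 3 L)].  Since
   [(sqrt 3 L) (|Z| / (sqrt 3 tau)) = L |Z| / tau], the event [Y > r] means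
   [psi (L |Z| / tau) > L^2 t / 2] with [t = 3 ln (1 + r)], so it is contained in
   the event [|Z| >= (tau / L) psi^-1 (L^2 t / 2)] of the hypothesis, and
   [P (Y > r) <= 2 e^-t = 2 / (1 + r)^3].  Integrating the tail,
   [E Y <= \int_0^oo 2 / (1 + r)^3 dr = 1], so [sqrt 3 tau] belongs to the set
   whose infimum is the Orlicz norm. *)

Section tail_integral.
Context {R : realType}.

Lemma is_derive_oneDXV (m : nat) (x : R) : -1 < x ->
  is_derive x 1 (fun y => ((1 + y) ^+ m)^-1) (- (m%:R / (1 + x) ^+ m.+1)).
Proof.
move=> x_gtN1; have x1_neq0 : 1 + x != 0 by rewrite gt_eqF//; lra.
have D1 : is_derive x 1 (fun y : R => 1 + y) 1.
  by have := @is_deriveD R R R (cst 1) id x 1 0 1; rewrite add0r; apply.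
have nz : ((fun y : R => 1 + y) ^+ m) x != 0 by rewrite exprfctE expf_neq0.
move: (is_deriveV nz (is_deriveX m D1)); rewrite exprfctE /= => /is_derive_eq; apply.
case: m {nz} => [|n]; first by rewrite !(mul0r, scale0r, scaler0, oppr0).
rewrite [_%:A]mulr1 /GRing.scale /= !exprS; field.
by rewrite expf_neq0.
Qed.

Lemma continuous_oneDXV (c : R) (m : nat) (x : R) : -1 < x ->
  {for x, continuous (fun y : R => c / (1 + y) ^+ m)}.
Proof.
move=> /(is_derive_oneDXV m) [/derivable1_diffP/differentiable_continuous cx _].
exact: (continuousM (@cst_continuous R R c x) cx).
Qed.

Lemma measurable_oneDXV (c : R) (m : nat) :
  measurable_fun (`[0%R, +oo[ : set R) (fun x : R => c / (1 + x) ^+ m).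
Proof.
apply/measurable_fun_itv_obnd_cbndP; apply: open_continuous_measurable_fun.
  exact: interval_open.
by move=> x; rewrite inE/= in_itv/= andbT => x_gt0; apply: continuous_oneDXV; lra.
Qed.

Lemma cvgy_oneDXV (n : nat) : ((1 + y) ^+ n.+1)^-1 @[y --> +oo] --> (0 : R).
Proof.
have y_ge0 : \forall y \near +oo, 0 <= y :> R by apply: nbhs_pinfty_ge.
apply/gtr0_cvgV0; first by near=> y; rewrite exprn_gt0// ltr_wpDr//; near: y.
apply/cvgryPge => A; near=> y.
have A_le_y : A <= y by near: y; apply: nbhs_pinfty_ge; rewrite num_real.
rewrite (le_trans A_le_y)// (@le_trans _ _ (1 + y))// ?lerDr// ler_eXnr// lerDl.
by near: y.
Unshelve. all: by end_near. Qed.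

Lemma integral0y_oneDXV (n : nat) :
  (\int[@lebesgue_measure R]_(x in `[0%R, +oo[) (n.+1%:R / (1 + x) ^+ n.+2)%:E = 1)%E.
Proof.
pose f x : R := n.+1%:R / (1 + x) ^+ n.+2.
pose F x : R := - ((1 + x) ^+ n.+1)^-1.
have DF (x : R) : -1 < x -> is_derive x 1 F (f x).
  by move=> /(is_derive_oneDXV n.+1)/is_deriveN; rewrite opprK.
have f_ge0 (x : R) : 0 <= x -> 0 <= f x.
  by move=> x_ge0; rewrite divr_ge0// exprn_ge0// addr_ge0.
have cf : {within `[0, +oo[, continuous f}.
  apply: continuous_in_subspaceT => x; rewrite inE/= in_itv/= andbT => x_ge0.
  by apply: continuous_oneDXV; lra.
have F_cvg : F x @[x --> +oo] --> 0.
  by rewrite -oppr0; apply: cvgN; exact: cvgy_oneDXV.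
have dF (x : R) : 0 < x -> derivable F x 1.
  by move=> x_gt0; have /DF[] : -1 < x by lra.
have F0 : F x @[x --> 0^'+] --> F 0.
  have /DF [/derivable1_diffP/differentiable_continuous cF _] : -1 < 0 :> R by lra.
  exact: cvg_at_right_filter.
have dFE : {in `]0, +oo[, derive1 F =1 f}.
  move=> x; rewrite in_itv/= andbT => x_gt0.
  have /DF DFx : -1 < x by lra.
  by rewrite derive1E derive_val.
rewrite (ge0_continuous_FTC2y f_ge0 cf F_cvg dF F0 dFE).
by rewrite /F addr0 expr1n invr1 EFinN oppeK add0e.
Qed.

End tail_integral.

Lemma orlicz_norm_le d (T : measurableType d) (R : realType) (P : probability T R)
    (Phi : R -> R) (X : T -> R) (c : R) :
  0 < c -> (\int[P]_x (Phi (`|X x| / c))%:E <= 1)%E ->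
  (orlicz_norm P Phi X <= c%:E)%E.
Proof. by move=> c_gt0 EPhi_le1; apply: ereal_inf_lbound; exists c. Qed.

Section PsiL.
Context {R : realType} (psi : R -> R).
Hypothesis psi_ge0 : forall x, 0 <= x -> 0 <= psi x.
Hypothesis psi_nd : forall x y, 0 <= x -> x <= y -> psi x <= psi y.

Lemma psi_inv_le (s u : R) : 0 <= u -> s < psi u -> psi_inv psi s <= u.
Proof.
(* If [s] has no preimage, [psi_inv psi s] is the default [0], still [<= u]. *)
move=> u_ge0 s_lt; rewrite /psi_inv; case: xgetP => [x _ [_ psi_x]|//].
by rewrite leNgt; apply/negP => /ltW/(psi_nd _ _ u_ge0); rewrite psi_x leNgt s_lt.
Qed.

Lemma PsiL_ge0 (L z : R) : 0 <= L * z -> 0 <= PsiL psi L z.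
Proof.
move=> Lz_ge0; rewrite /PsiL subr_ge0 -expR0 ler_expR.
by rewrite mulr_ge0 ?divr_ge0 ?sqr_ge0// psi_ge0.
Qed.

Lemma PsiL_le (L z z' : R) : 0 < L -> 0 <= z -> z <= z' ->
  PsiL psi L z <= PsiL psi L z'.
Proof.
move=> L_gt0 z_ge0 zz'; rewrite /PsiL lerD2r ler_expR ler_wpM2l ?divr_ge0 ?sqr_ge0//.
by apply: psi_nd; rewrite ?ler_pM2l// mulr_ge0// ltW.
Qed.

Lemma psi_inv_le_of_PsiL_gt (k tau L z r : R) :
  0 < k -> 0 < tau -> 0 < L -> 0 <= z -> 0 <= r ->
  r < PsiL psi (k * L) (z / (k * tau)) ->
  tau / L * psi_inv psi (L ^+ 2 * (k ^+ 2 * ln (1 + r)) / 2) <= z.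
Proof.
move=> k_gt0 tau_gt0 L_gt0 z_ge0 r_ge0; rewrite /PsiL.
have -> : k * L * (z / (k * tau)) = L * z / tau by field; rewrite !gt_eqF.
move=> r_lt; have lt_ln : ln (1 + r) < 2 / (k * L) ^+ 2 * psi (L * z / tau).
  by rewrite -ltr_expR lnK ?posrE; lra.
have Lz_ge0 : 0 <= L * z / tau by rewrite divr_ge0 ?mulr_ge0 ?(ltW L_gt0) ?(ltW tau_gt0).
have lt_psi : L ^+ 2 * (k ^+ 2 * ln (1 + r)) / 2 < psi (L * z / tau).
  have kL2_gt0 : 0 < (k * L) ^+ 2 / 2 by rewrite divr_gt0 ?exprn_gt0 ?mulr_gt0.
  have -> : L ^+ 2 * (k ^+ 2 * ln (1 + r)) / 2 = (k * L) ^+ 2 / 2 * ln (1 + r) by ring.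
  rewrite -[X in _ < X](_ : (k * L) ^+ 2 / 2 * (2 / (k * L) ^+ 2 * psi (L * z / tau)) = _).
    by rewrite ltr_pM2l.
  by field; rewrite !gt_eqF.
rewrite -ler_pdivlMl ?divr_gt0// invf_div.
by rewrite (le_trans (psi_inv_le _ _ Lz_ge0 lt_psi))// mulrAC.
Qed.

End PsiL.

Lemma measurable_fun_nondecreasing_normr {R : realType} (f : R -> R) :
  (forall x y, 0 <= x -> x <= y -> f x <= f y) ->
  measurable_fun setT (fun x : R => f `|x|).
Proof.
move=> f_nd.
have -> : (fun x : R => f `|x|) = (fun x => f (Num.max x 0)) \o (fun x : R => `|x|).
  by apply/funext => x /=; rewrite max_l.
apply: measurableT_comp => //; apply: nondecreasing_measurable => // x y xy.
apply: f_nd; first by rewrite le_max lexx orbT.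
by rewrite ge_max !le_max xy lexx !orbT.
Qed.

Section orlicz_norm_of_psi_tail.
Context d (T : measurableType d) (R : realType) (P : probability T R).
Variables (psi : R -> R) (tau L : R) (Z : {RV P >-> R}).
Hypothesis psi_ge0 : forall x, 0 <= x -> 0 <= psi x.
Hypothesis psi_nd : forall x y, 0 <= x -> x <= y -> psi x <= psi y.
Hypotheses (tau_gt0 : 0 < tau) (L_gt0 : 0 < L).
Hypothesis Z_tail : forall t : R, 0 < t ->
  (P [set x | (tau / L * psi_inv psi (L ^+ 2 * t / 2) <= `|Z x|)%R]
    <= (2 * expR (- t))%:E)%E.

Let k := Num.sqrt 3 : R.
Let k_gt0 : 0 < k. Proof. by rewrite sqrtr_gt0. Qed.
Let Y x := PsiL psi (k * L) (`|Z x| / (k * tau)).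

Let Y_ge0 x : 0 <= Y x.
Proof.
apply: PsiL_ge0 => //.
by rewrite !mulr_ge0 ?invr_ge0 ?mulr_ge0 ?(ltW k_gt0) ?(ltW L_gt0) ?(ltW tau_gt0).
Qed.

Let measurable_Y : measurable_fun setT Y.
Proof.
pose f u := PsiL psi (k * L) (u / (k * tau)).
have mf : measurable_fun setT (fun z : R => f `|z|).
  apply: measurable_fun_nondecreasing_normr => u u' u_ge0 uu'.
  have ktau_gt0 : 0 < k * tau by rewrite mulr_gt0.
  by apply: PsiL_le => //; rewrite ?mulr_gt0 ?divr_ge0 ?ler_pM2r ?invr_gt0// ltW.
exact: measurableT_comp mf (measurable_funPT Z).
Qed.

Let measurable_Y_gt (r : R) : measurable [set x | (r < Y x)%R].
Proof.
have -> : [set x | (r < Y x)%R] = Y @^-1` `]r, +oo[.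
  by apply/seteqP; split => x /=; rewrite in_itv/= andbT.
by rewrite -[_ @^-1` _]setTI; exact: measurable_Y.
Qed.

Lemma PsiL_tail (r : R) : 0 < r ->
  (P [set x | (r < Y x)%R] <= (2 / (1 + r) ^+ 3)%:E)%E.
Proof.
move=> r_gt0; pose t := 3 * ln (1 + r).
have t_gt0 : 0 < t by rewrite mulr_gt0// ln_gt0// ltrDl.
have -> : 2 / (1 + r) ^+ 3 = 2 * expR (- t).
  by rewrite expRN /t expRM_natl lnK ?posrE// ltr_wpDr// ltW.
apply: le_trans (Z_tail _ t_gt0); apply: le_measure; rewrite ?inE.
- exact: measurable_Y_gt.
- set a := (X in [set x | (X <= _)%R]).
  have -> : [set x | (a <= `|Z x|)%R] = (fun x => `|Z x|) @^-1` `[a, +oo[.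
    by apply/seteqP; split => x /=; rewrite in_itv/= andbT.
  by rewrite -[_ @^-1` _]setTI; apply: measurableT_comp.
- move=> x /= /psi_inv_le_of_PsiL_gt; rewrite sqr_sqrtr//; apply => //.
  exact: ltW.
Qed.

Lemma integral_PsiL_le1 : (\int[P]_x (Y x)%:E <= 1)%E.
Proof.
pose X : {RV P >-> R} := mfun_Sub (mem_set measurable_Y).
have -> : (\int[P]_x (Y x)%:E = 'E_P[X])%E by rewrite expectation_def.
rewrite ge0_expectation_ccdf// -(integral0y_oneDXV 1).
apply: ge0_le_integral => //.
- exact: measurable_funTS (ccdf_measurable X).
- by apply/measurable_EFinP; exact: measurable_oneDXV.
move=> r; rewrite /= in_itv/= andbT => r_ge0.
have -> : ccdf X r = P [set x | (r < Y x)%R].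
  by congr (P _); apply/seteqP; split => x /=; rewrite in_itv/= andbT.
move: r_ge0; rewrite le_eqVlt => /predU1P[<-|]; last exact: PsiL_tail.
apply: le_trans (probability_le1 P (measurable_Y_gt 0)) _.
by rewrite addr0 expr1n divr1 lee_fin ler1n.
Qed.

End orlicz_norm_of_psi_tail.

Theorem lemma17 (d : measure_display) (T : measurableType d) (R : realType)
  (P : probability T R) (psi : R -> R) (tau L : R) (Z : {RV P >-> R}) :
  admissible_psi psi -> 0 < tau -> 0 < L ->
  (forall t : R, 0 < t ->
     (P [set x | (tau / L * psi_inv psi (L ^+ 2 * t / 2) <= `|Z x|)%R]
        <= (2 * expR (- t))%:E)%E) ->
  (orlicz_norm P (PsiL psi (Num.sqrt 3 * L)) Z <= (Num.sqrt 3 * tau)%:E)%E.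
Proof.
move=> [psi_ge0 _ psi_nd _ _] tau_gt0 L_gt0 Z_tail.
apply: orlicz_norm_le; first by rewrite mulr_gt0// sqrtr_gt0.
by apply: integral_PsiL_le1.
Qed.
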